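(* In any finite ELP, if $\mu$ is an optimal policy, then the Lagrangian $\mathcal L_\mu$ with conjugate policy $\mu$ satisfies $$\min_{Q\in\mathcal Q}\max_{\lambda\ge0}\mathcal L_\mu(Q,\lambda)=\max_{\lambda\ge0}\min_{Q\in\mathcal Q}\mathcal L_\mu(Q,\lambda)=J(\mu).$$
   Context: A finite ELP is $(\mathcal S,\mathcal A,P,R,\rho)$ with finite $\mathcal S,\mathcal A$, reward $R:\mathcal S\to\mathbb R$, transitions $P(s'|s,a)$, distribution $\rho$, and nonempty terminal set $\mathcal S_\bot$. Under a policy $\pi$, $S_0$ is a fixed terminal state, $A_t\sim\pi(\cdot|S_t)$, $S_{t+1}\sim P(\cdot|S_t,A_t)$, and $T=\inf\{t\ge1:S_t\in\mathcal S_\bot\}$. ELP conditions: $\mathbb E_\pi[T]<\infty$ for every $\pi$; $P(s'|s,a)=\rho(s')$ for all $s\in\mathcal S_\bot$, all $a,s'$; every state is reachable under some policy. $J(\pi)=\mathbb E_\pi[\sum_{t=1}^TR(S_t)]$; $\mu$ optimal means $J(\mu)=\max_\pi J(\pi)$. $\mathcal Q$ = all functions $\mathcal S\times\mathcal A\to\mathbb R$; $\lambda\ge0$ ranges over functions $\mathcal S\times\mathcal A\to[0,\infty)$. $\mathcal BQ(s,a)=\sum_{s'}P(s'|s,a)\big(R(s')+\mathbf 1[s'\notin\mathcal S_\bot]\max_{a'}Q(s',a')\big)$. $\mathcal L_\pi(Q,\lambda)=\mathbb E_\pi[Q(S_T,A_T)]+\sum_{s,a}\lambda(s,a)(\mathcal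 BQ(s,a)-Q(s,a))$ with $A_T\sim\pi(\cdot|S_T)$. *)

From HB Require Import structures.
From mathcomp Require Import all_boot all_order all_algebra.
From mathcomp Require Import all_classical all_reals all_analysis.
Set Implicit Arguments. Unset Strict Implicit. Unset Printing Implicit Defensive.
Import Order.TTheory GRing.Theory Num.Theory.
Import numFieldNormedType.Exports.
Local Open Scope classical_set_scope.
Local Open Scope ring_scope.

Section ELP.
Variables (R : realType) (S A : finType).
(* transition kernel P s a s' = P(s' | s, a) *)
Variable (P : S -> A -> S -> R).
Variable (rew : S -> R).
Variable (rho : S -> R).
(* terminal set S_bot and the fixed initial terminal state S_0 *)
Variable (term : {set S}) (s0 : S).

Definition is_policy (pi : S -> A -> R) : Prop :=
  (forall s a, 0 <= pi s a) /\ (forall s, \sum_(a : A) pi s a = 1).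

(* occ pi n s = Pr_pi(S_{n+1} = s, T >= n+1), i.e. S_1,...,S_n are all non-terminal. *)
Fixpoint occ (pi : S -> A -> R) (n : nat) : S -> R :=
  match n with
  | 0 => fun s' => \sum_(a : A) pi s0 a * P s0 a s'
  | m.+1 => fun s' =>
      \sum_(s : S | s \notin term) occ pi m s * \sum_(a : A) pi s a * P s a s'
  end.

(* E_pi[T] = sum_{t>=1} Pr(T >= t) : we require convergence of this series *)
Definition finite_expected_T (pi : S -> A -> R) : Prop :=
  cvgn (series (fun n => \sum_(s : S) occ pi n s)).

(* J(pi) = E_pi[ sum_{t=1}^T R(S_t) ] = sum_{t>=1} E[R(S_t) 1{T >= t}] *)
Definition J (pi : S -> A -> R) : R :=
  limn (series (fun n => \sum_(s : S) occ pi n s * rew s)).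

(* E_pi[Q(S_T, A_T)], A_T ~ pi(.|S_T) : Pr(T = n+1, S_T = s) = occ pi n s for s terminal *)
Definition Eterm (pi : S -> A -> R) (Q : S -> A -> R) : R :=
  limn (series (fun n =>
    \sum_(s in term) occ pi n s * \sum_(a : A) pi s a * Q s a)).

Definition maxQ (Q : S -> A -> R) (s : S) : R :=
  fine (\big[maxe/-oo%E]_(a : A) (Q s a)%:E).

Definition bellman (Q : S -> A -> R) (s : S) (a : A) : R :=
  \sum_(s' : S) P s a s' *
     (rew s' + (if s' \in term then 0 else maxQ Q s')).

Definition lagrangian (pi : S -> A -> R) (Q lam : S -> A -> R) : R :=
  Eterm pi Q + \sum_(s : S) \sum_(a : A) lam s a * (bellman Q s a - Q s a).

Definition nonneg_mult (lam : S -> A -> R) : Prop := forall s a, 0 <= lam s a.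

Definition sup_lam (pi : S -> A -> R) (Q : S -> A -> R) : \bar R :=
  ereal_sup [set (lagrangian pi Q lam)%:E | lam in nonneg_mult].

Definition inf_Q (pi : S -> A -> R) (lam : S -> A -> R) : \bar R :=
  ereal_inf [set (lagrangian pi Q lam)%:E | Q in [set: S -> A -> R]].

Definition is_finite_ELP : Prop :=
  [/\
      (forall s a s', 0 <= P s a s') /\ (forall s a, \sum_(s' : S) P s a s' = 1),
      (forall s, 0 <= rho s) /\ \sum_(s : S) rho s = 1,
      term != finset.set0 /\ s0 \in term,
      (forall pi, is_policy pi -> finite_expected_T pi) &
      (forall s a s', s \in term -> P s a s' = rho s') /\
      (forall s, exists pi, is_policy pi /\ exists n, 0 < occ pi n s)].

Definition is_optimal (mu : S -> A -> R) : Prop :=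
  is_policy mu /\ forall pi, is_policy pi -> J pi <= J mu.

End ELP.

From HB Require Import structures.
From mathcomp Require Import all_boot all_order all_algebra.
From mathcomp Require Import all_classical all_reals all_analysis.
From mathcomp Require Import ring lra.
Import Order.TTheory GRing.Theory Num.Theory.
Import numFieldNormedType.Exports.
Local Open Scope classical_set_scope.
Local Open Scope ring_scope.

(* Weak duality: with d(s) the expected number of visits of mu to s before
   termination, the multiplier lam(s,a) = mu(a|s) d(s) makes the Lagrangian
   equal to J(mu) once the Bellman optimality operator is replaced by the
   evaluation operator of mu (d is stationary for the restarted chain); as the
   optimality operator dominates it, L_mu(Q, lam) >= J(mu) for every Q.
   Strong duality: the optimal action-value function Q* is a fixed point of the
   optimality operator, so L_mu(Q*, .) is constant, equal to E_mu[Q*(S_T, A_T)].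
   Since all terminal states restart with rho, this value does not depend on
   the policy and equals J of an optimal deterministic policy, hence is at most
   J(mu).  Q* is built from the deterministic policy maximising the total value
   over nonterminal states: policy evaluation is solvable and this policy is
   greedy by a minimum principle for h = g + K h, which holds because finite
   expected termination times and reachability leave no closed set of
   nonterminal states. *)

Lemma ler_sum_term (R : numDomainType) (I : finType) (P : pred I) (F : I -> R) j :
  P j -> (forall i, P i -> 0 <= F i) -> F j <= \sum_(i | P i) F i.
Proof.
move=> Pj F_ge0; rewrite (bigD1 j) //= lerDl.
by apply: sumr_ge0 => i /andP[Pi _]; exact: F_ge0.
Qed.

Lemma saddle_point_value {R : realType} {X Y : Type} {Ys : set Y}
    {L : X -> Y -> R} {x0 : X} {y0 : Y} {v : R} :
  Ys y0 -> (forall y, Ys y -> L x0 y = v) -> (forall x, v <= L x y0) ->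
  [/\ ereal_inf (range (fun x => ereal_sup [set (L x y)%:E | y in Ys])) = v%:E,
      ereal_sup [set (L x0 y)%:E | y in Ys] = v%:E,
      ereal_sup [set ereal_inf [set (L x y)%:E | x in [set: X]] | y in Ys] = v%:E &
      ereal_inf [set (L x y0)%:E | x in [set: X]] = v%:E].
Proof.
move=> Yy0 Lx0 Ly0.
have sup_x0 : ereal_sup [set (L x0 y)%:E | y in Ys] = v%:E.
  apply/eqP; rewrite eq_le; apply/andP; split.
    by apply: ge_ereal_sup => _ [y Yy <-]; rewrite Lx0.
  by apply: ereal_sup_ubound; exists y0 => //; rewrite Lx0.
have inf_y0 : ereal_inf [set (L x y0)%:E | x in [set: X]] = v%:E.
  apply/eqP; rewrite eq_le; apply/andP; split.
    by apply: ereal_inf_lbound; exists x0 => //; rewrite Lx0.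
  by apply: le_ereal_inf_tmp => _ [x _ <-]; rewrite lee_fin.
split=> //; apply/eqP; rewrite eq_le; apply/andP; split.
- by apply: ereal_inf_lbound; exists x0.
- apply: le_ereal_inf_tmp => _ [x _ <-].
  apply: (@le_trans _ _ (L x y0)%:E); first by rewrite lee_fin.
  by apply: ereal_sup_ubound; exists y0.
- apply: ge_ereal_sup => _ [y Yy <-].
  by apply: ereal_inf_lbound; exists x0 => //; rewrite Lx0.
- by apply: ereal_sup_ubound; exists y0.
Qed.

Section FiniteELP.
Variables (R : realType) (S A : finType) (P : S -> A -> S -> R) (rew rho : S -> R)
  (term : {set S}) (s0 : S).
Hypothesis P_ge0 : forall s a s', 0 <= P s a s'.
Hypothesis P_sum1 : forall s a, \sum_s' P s a s' = 1.
Hypothesis s0_term : s0 \in term.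
Hypothesis finite_T : forall pi, is_policy pi -> finite_expected_T P term s0 pi.
Hypothesis P_restart : forall s a s', s \in term -> P s a s' = rho s'.
Hypothesis reachable :
  forall s, exists pi, is_policy pi /\ exists n, 0 < occ P term s0 pi n s.

Local Notation occ := (occ P term s0).
Local Notation J := (J P rew term s0).
Local Notation Eterm := (Eterm P term s0).

Definition chain (pi : S -> A -> R) s s' := \sum_a pi s a * P s a s'.

Definition occupancy (pi : S -> A -> R) s := limn (series (occ pi ^~ s)).

Section Policy.
Context { pi : S -> A -> R } (pi_policy : is_policy pi).

Lemma chain_ge0 s s' : 0 <= chain pi s s'.
Proof. by apply: sumr_ge0 => a _; apply: mulr_ge0; [case: pi_policy|]. Qed.

Lemma chain_sum1 s : \sum_s' chain pi s s' = 1.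
Proof.
rewrite /chain exchange_big /= -(proj2 pi_policy s).
by apply: eq_bigr => a _; rewrite -mulr_sumr P_sum1 mulr1.
Qed.

Lemma chain_restart s s' : s \in term -> chain pi s s' = rho s'.
Proof.
move=> s_term; rewrite /chain; under eq_bigr do rewrite P_restart //.
by rewrite -mulr_suml (proj2 pi_policy s) mul1r.
Qed.

Lemma occ_ge0 n s : 0 <= occ pi n s.
Proof.
elim: n s => [|n IHn] s /=; first exact: chain_ge0.
by apply: sumr_ge0 => y _; apply: mulr_ge0 => //; exact: chain_ge0.
Qed.

Lemma is_cvg_occupancy s : cvgn (series (occ pi ^~ s)).
Proof.
apply: (@series_le_cvg _ _ (fun n => \sum_s occ pi n s)).
- by move=> n; exact: occ_ge0.
- by move=> n; apply: sumr_ge0 => *; exact: occ_ge0.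
- by move=> n; apply: ler_sum_term => // *; exact: occ_ge0.
- exact: finite_T.
Qed.

Lemma occupancy_ge0 s : 0 <= occupancy pi s.
Proof.
apply: limr_ge; first exact: is_cvg_occupancy.
by near=> n; apply: sumr_ge0 => k _; exact: occ_ge0.
Unshelve. all: by end_near.
Qed.

Lemma cvg_series_occ_weighted (Pr : pred S) (X : S -> R) :
  series (fun n => \sum_(s | Pr s) occ pi n s * X s) @ \oo
   --> \sum_(s | Pr s) occupancy pi s * X s.
Proof.
have -> : series (fun n => \sum_(s | Pr s) occ pi n s * X s) =
    (fun n => \sum_(s | Pr s) series (occ pi ^~ s) n * X s).
  apply: funext => n; rewrite /series /= exchange_big /=.
  by apply: eq_bigr => s _; rewrite mulr_suml.
apply: cvg_big => [|s _]; first exact: add_continuous.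
by apply: cvgM; [exact: is_cvg_occupancy | exact: cvg_cst].
Qed.

Lemma J_occupancy : J pi = \sum_s occupancy pi s * rew s.
Proof. exact/cvg_lim/(cvg_series_occ_weighted predT). Qed.

Lemma Eterm_occupancy Q :
  Eterm pi Q = \sum_(s in term) occupancy pi s * (\sum_a pi s a * Q s a).
Proof. exact/cvg_lim/cvg_series_occ_weighted. Qed.

Lemma occupancy_flow s' :
  occupancy pi s' =
    chain pi s0 s' + \sum_(s | s \notin term) occupancy pi s * chain pi s s'.
Proof.
apply: cvg_lim => //; rewrite -cvg_shiftS /=.
under eq_fun do rewrite /series /= big_nat_recl //= -/(series _ _).
apply: cvgD; first exact: cvg_cst.
exact: (cvg_series_occ_weighted (fun s => s \notin term)).
Qed.

Lemma occupancy_term_sum1 : \sum_(s in term) occupancy pi s = 1.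
Proof.
have : \sum_s' occupancy pi s' = 1 + \sum_(s | s \notin term) occupancy pi s.
  under eq_bigr do rewrite occupancy_flow.
  rewrite big_split /= chain_sum1 exchange_big /=; congr (_ + _).
  by apply: eq_bigr => s _; rewrite -mulr_sumr chain_sum1 mulr1.
by rewrite (bigID (mem term)) /= => /addIr.
Qed.

Lemma occupancy_stationary (W : S -> R) :
  \sum_s occupancy pi s * (\sum_s' chain pi s s' * W s') = \sum_s occupancy pi s * W s.
Proof.
rewrite (bigID (mem term)) /=.
have -> : \sum_(s in term) occupancy pi s * (\sum_s' chain pi s s' * W s') =
    \sum_s' chain pi s0 s' * W s'.
  transitivity (\sum_(s in term) occupancy pi s * (\sum_s' chain pi s0 s' * W s')).
    apply: eq_bigr => s s_term; congr (_ * _).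
    by apply: eq_bigr => s' _; rewrite !chain_restart.
  by rewrite -mulr_suml occupancy_term_sum1 mul1r.
have -> : \sum_(s | s \notin term) occupancy pi s * (\sum_s' chain pi s s' * W s') =
    \sum_s' (\sum_(s | s \notin term) occupancy pi s * chain pi s s') * W s'.
  under eq_bigr do rewrite mulr_sumr.
  rewrite exchange_big /=; apply: eq_bigr => s' _; rewrite mulr_suml.
  by apply: eq_bigr => s _; rewrite mulrA.
by rewrite -big_split /=; apply: eq_bigr => s' _; rewrite -mulrDl -occupancy_flow.
Qed.

End Policy.

Definition closed_under (pi : S -> A -> R) (C : {set S}) :=
  forall x s, x \in C -> 0 < chain pi x s -> s \in C.

Section ClosedSet.
Context { pi : S -> A -> R } (pi_policy : is_policy pi) { C : {set S} }.
Hypotheses (C_nonterm : forall s, s \in C -> s \notin term)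
  (C_closed : closed_under pi C).

Lemma closed_mass_nondecreasing :
  nondecreasing_seq (fun n => \sum_(z in C) occ pi n z).
Proof.
apply/nondecreasing_seqP => n.
have C_stays y : y \in C -> \sum_(z in C) chain pi y z = 1.
  move=> yC; rewrite -(chain_sum1 pi_policy y) [RHS](bigID (mem C)) /=.
  rewrite [X in _ = _ + X]big1 ?addr0 // => z zC; apply/eqP.
  rewrite eq_le chain_ge0 // andbT leNgt; apply/negP => /(C_closed _ _ yC).
  by rewrite (negbTE zC).
apply: (@le_trans _ _ (\sum_(z in C) \sum_(y in C) occ pi n y * chain pi y z)).
  rewrite exchange_big /=; apply: ler_sum => y yC.
  by rewrite -mulr_sumr C_stays // mulr1.
apply: ler_sum => z _; rewrite /= big_mkcond [leRHS]big_mkcond /=.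
apply: ler_sum => y _.
case: ifP => [/C_nonterm -> //|_]; case: ifP => // _.
by apply: mulr_ge0; [exact: occ_ge0 | exact: chain_ge0].
Qed.

Lemma closed_occ0 n z : z \in C -> occ pi n z = 0.
Proof.
pose F n := \sum_(z in C) occ pi n z.
have F_ge0 m : 0 <= F m by apply: sumr_ge0 => *; exact: occ_ge0.
have F_le m : F m <= \sum_s occ pi m s.
  rewrite /F [leRHS](bigID (mem C)) /= lerDl.
  by apply: sumr_ge0 => *; exact: occ_ge0.
have F0 : F @ \oo --> 0.
  apply: (@squeeze_cvgr _ _ _ _ (fun=> 0) (fun m => \sum_s occ pi m s)).
  - by near=> m; rewrite F_ge0 F_le.
  - exact: cvg_cst.
  - exact/cvg_series_cvg_0/finite_T.
have Fn0 : F n = 0.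
  apply/eqP; rewrite eq_le F_ge0 andbT -(cvg_lim _ F0) //.
  exact: nondecreasing_cvgn_le closed_mass_nondecreasing (cvgP _ F0) n.
by move: z; apply: psumr_eq0P Fn0 => *; exact: occ_ge0.
Unshelve. all: by end_near.
Qed.

End ClosedSet.

Lemma occ_gt0_transfer { pi pi' : S -> A -> R } { C : {set S} } :
  is_policy pi -> is_policy pi' -> s0 \notin C ->
  (forall s, s \notin C -> pi s =1 pi' s) ->
  (forall n z, z \in C -> occ pi n z = 0) ->
  forall n s, 0 < occ pi' n s -> 0 < occ pi n s.
Proof.
move=> pol pol' s0C agree vanish.
have chain_agree y : y \notin C -> chain pi y =1 chain pi' y.
  by move=> yC s; apply: eq_bigr => a _; rewrite agree.
elim=> [|n IHn] s /=; first by rewrite -/(chain _ _ _) -chain_agree.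
move=> /lt0r_neq0 /eqP /psumr_neq0P[y|y /andP[yn]].
  by move=> _; apply: mulr_ge0; [exact: occ_ge0 | exact: chain_ge0].
rewrite mulr_ge0_gt0 ?occ_ge0 ?chain_ge0 // => /andP[/IHn occ_y chain_y].
have yC : y \notin C by apply: contraTN occ_y => /vanish ->; rewrite ltxx.
apply: lt_le_trans (@ler_sum_term _ _ _ (fun x => occ pi n x * chain pi x s) _ yn _).
  by rewrite mulr_gt0 // chain_agree.
by move=> x _; apply: mulr_ge0; [exact: occ_ge0 | exact: chain_ge0].
Qed.

Lemma no_closed_nonterminal_set (pi : S -> A -> R) (C : {set S}) c :
  is_policy pi -> c \in C -> (forall s, s \in C -> s \notin term) ->
  closed_under pi C -> False.
Proof.
move=> pol cC C_nonterm C_closed.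
have [pi' [pol' [n reach_c]]] := reachable c.
pose pi2 s := if s \in C then pi s else pi' s.
have pol2 : is_policy pi2.
  by split=> [s a|s]; rewrite /pi2; case: ifP; case: pol; case: pol'.
have C_closed2 : closed_under pi2 C.
  by move=> x s xC; rewrite /chain /pi2 xC; exact: C_closed.
have s0C : s0 \notin C by apply: contraTN s0_term => /C_nonterm.
have vanish := closed_occ0 pol2 C_nonterm C_closed2.
have agree s : s \notin C -> pi2 s =1 pi' s by move=> /negbTE sC a; rewrite /pi2 sC.
have := occ_gt0_transfer pol2 pol' s0C agree vanish _ _ reach_c.
by rewrite vanish // ltxx.
Qed.

Definition solves_evaluation (pi : S -> A -> R) (g h : S -> R) :=
  forall y, y \notin term -> h y = g y + \sum_(s | s \notin term) chain pi y s * h s.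

Section MinimumPrinciple.
Context { pi : S -> A -> R } (pi_policy : is_policy pi).

Lemma argmin_successors { g h : S -> R } { x : S } :
  solves_evaluation pi g h -> x \notin term -> 0 <= g x ->
  (forall s, s \notin term -> h x <= h s) -> h x < 0 ->
  forall s, 0 < chain pi x s -> s \notin term /\ h s = h x.
Proof.
move=> hh xn gx xmin hx_lt0 s chain_xs.
set m := h x in xmin hx_lt0 *.
pose sig := \sum_(s | s \notin term) chain pi x s.
pose E := \sum_(s | s \notin term) chain pi x s * (h s - m).
have E_terms_ge0 s' : s' \notin term -> 0 <= chain pi x s' * (h s' - m).
  by move=> s'n; rewrite mulr_ge0 ?chain_ge0 // subr_ge0 xmin.
have mass : \sum_(s in term) chain pi x s + sig = 1.
  by rewrite -(chain_sum1 pi_policy x) [RHS](bigID (mem term)).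
have term_mass_ge0 : 0 <= \sum_(s in term) chain pi x s.
  by apply: sumr_ge0 => *; exact: chain_ge0.
have hm : m = g x + (m * sig + E).
  rewrite {1}/m (hh x xn); congr (_ + _); rewrite /E /sig mulr_sumr -big_split /=.
  by apply: eq_bigr => s' _; ring.
have E_ge0 : 0 <= E by exact: sumr_ge0.
(* [hm] reads [m * (terminal mass) = g x + E >= 0] with [m < 0] *)
have [term_mass0 E0] : \sum_(s in term) chain pi x s = 0 /\ E = 0 by split; nra.
have sn : s \notin term.
  apply: contraTN chain_xs => s_term; rewrite -leNgt -term_mass0.
  by apply: ler_sum_term => // *; exact: chain_ge0.
split=> //; have /eqP := psumr_eq0P E_terms_ge0 E0 sn.
by rewrite mulf_eq0 subr_eq0 gt_eqF //= => /eqP.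
Qed.

Lemma evaluation_ge0 { g h : S -> R } :
  (forall y, y \notin term -> 0 <= g y) -> solves_evaluation pi g h ->
  forall y, y \notin term -> 0 <= h y.
Proof.
move=> g_ge0 hh y yn; rewrite leNgt; apply/negP => hy.
pose z := [arg min_(z < y | z \notin term) h z]%O.
have [zn zmin] : z \notin term /\ forall s, s \notin term -> h z <= h s.
  by rewrite /z; case: arg_minP => // i Pi Hi; split=> // s /Hi.
have hz : h z < 0 := le_lt_trans (zmin y yn) hy.
pose C := [set s | (s \notin term) && (h s == h z)]%SET.
apply: (@no_closed_nonterminal_set pi C z pi_policy).
- by rewrite inE zn eqxx.
- by move=> s; rewrite inE => /andP[].
move=> x s; rewrite inE => /andP[xn /eqP hx] chain_xs.
have xmin s' : s' \notin term -> h x <= h s' by rewrite hx; exact: zmin.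
have hx_lt0 : h x < 0 by rewrite hx.
have [sn hs] := argmin_successors hh xn (g_ge0 x xn) xmin hx_lt0 s chain_xs.
by rewrite inE sn hs hx eqxx.
Qed.

End MinimumPrinciple.

Section PolicyEvaluation.
Context { pi : S -> A -> R } (pi_policy : is_policy pi).

(* [I - K] on the nonterminal states, the identity on the terminal ones *)
Definition evaluation_mx : 'M[R]_#|S| := \matrix_(i, j) ((i == j)%:R -
  (if (enum_val i \notin term) && (enum_val j \notin term)
   then chain pi (enum_val i) (enum_val j) else 0)).

Lemma evaluation_mx_row (w : 'I_#|S| -> R) y :
  \sum_j evaluation_mx (enum_rank y) j * w j = w (enum_rank y) -
    (if y \notin term then \sum_(s | s \notin term) chain pi y s * w (enum_rank s)
     else 0).
Proof.
rewrite (reindex enum_rank) /=; last first.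
  by exists enum_val => i _; [exact: enum_rankK | exact: enum_valK].
under eq_bigr do rewrite mxE !enum_rankK mulrBl.
rewrite sumrB (bigD1 y) //= eqxx mul1r big1 ?addr0; last first.
  by move=> s /negbTE ne; rewrite (inj_eq enum_rank_inj) eq_sym ne mul0r.
congr (_ - _); case: ifP => y_term /=.
  by rewrite [RHS]big_mkcond; apply: eq_bigr => s _; case: ifP; rewrite ?mul0r.
by rewrite big1 // => s _; rewrite mul0r.
Qed.

Lemma evaluation_mx_unit : evaluation_mx \in unitmx.
Proof.
rewrite unitmxE unitfE -det_tr; apply/negP => /det0P[v v_neq0 v_ker].
pose h s : R := v 0 (enum_rank s).
have v_row y : h y - (if y \notin term
    then \sum_(s | s \notin term) chain pi y s * h s else 0) = 0.
  rewrite -(evaluation_mx_row (v 0)).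
  transitivity ((v *m evaluation_mx^T) 0 (enum_rank y)); last by rewrite v_ker mxE.
  by rewrite mxE; apply: eq_bigr => j _; rewrite mulrC [in RHS]mxE.
have h_eval : solves_evaluation pi (fun=> 0) h.
  by move=> y yn; have /eqP := v_row y; rewrite yn add0r subr_eq0 => /eqP.
have hN_eval : solves_evaluation pi (fun=> 0) (fun s => - h s).
  by move=> y yn; rewrite h_eval // !add0r -sumrN; apply: eq_bigr => s _; rewrite mulrN.
move/eqP: v_neq0; apply; apply/rowP => j; rewrite mxE -(enum_valK j) -/(h _).
have [y_term|yn] := boolP (enum_val j \in term).
  by have := v_row (enum_val j); rewrite y_term subr0.
have zero_ge0 y : y \notin term -> 0 <= 0 :> R by [].
apply/eqP; rewrite eq_le -oppr_ge0.
by rewrite (evaluation_ge0 pi_policy zero_ge0 h_eval)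
  ?(evaluation_ge0 pi_policy zero_ge0 hN_eval).
Qed.

Lemma evaluation_solvable (g : S -> R) : exists h, solves_evaluation pi g h.
Proof.
pose x := invmx evaluation_mx *m \col_i g (enum_val i).
exists (fun s => x (enum_rank s) 0) => y yn.
have := congr1 (fun M : 'cV_#|S| => M (enum_rank y) 0)
  (mulKVmx evaluation_mx_unit (\col_i g (enum_val i))).
rewrite [LHS]mxE [RHS]mxE enum_rankK -/x => <-.
by rewrite (evaluation_mx_row (fun j => x j 0)) yn subrK.
Qed.

End PolicyEvaluation.

Lemma maxQ_attained (a0 : A) (Q : S -> A -> R) s :
  exists a, maxQ Q s = Q s a /\ forall a', Q s a' <= Q s a.
Proof.
have [|a _ Qa] := @eq_bigmax _ _ _ -oo%E a0 predT (fun a => (Q s a)%:E) isT.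
  by move=> a _; exact: leNye.
exists a; split=> [|a']; first by rewrite /maxQ Qa.
by rewrite -lee_fin -Qa; exact: (le_bigmax -oo%E (fun a => (Q s a)%:E) a').
Qed.

Lemma le_maxQ (Q : S -> A -> R) s a : Q s a <= maxQ Q s.
Proof. by have [a' [-> Qa']] := maxQ_attained a Q s; exact: Qa'. Qed.

Definition det_policy (f : {ffun S -> A}) : S -> A -> R := fun s a => (a == f s)%:R.

Lemma is_policy_det f : is_policy (det_policy f).
Proof.
split=> [s a|s]; first by rewrite /det_policy ler0n.
by rewrite /det_policy (bigD1 (f s)) //= eqxx big1 ?addr0 // => a /negbTE ->.
Qed.

Lemma chain_det f y s : chain (det_policy f) y s = P y (f y) s.
Proof.
rewrite /chain /det_policy (bigD1 (f y)) //= eqxx mul1r big1 ?addr0 //.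
by move=> a /negbTE ->; rewrite mul0r.
Qed.

Definition qvalue (V : S -> R) s a :=
  \sum_s' P s a s' * (rew s' + (if s' \in term then 0 else V s')).

Lemma qvalue_split V s a : qvalue V s a =
  \sum_s' P s a s' * rew s' + \sum_(s' | s' \notin term) P s a s' * V s'.
Proof.
rewrite /qvalue [X in _ = _ + X]big_mkcond -big_split /=.
by apply: eq_bigr => s' _; rewrite mulrDr; case: ifP; rewrite ?mulr0.
Qed.

Lemma exists_det_value (f : {ffun S -> A}) :
  exists V : S -> R, forall y, y \notin term -> V y = qvalue V y (f y).
Proof.
have [V V_eval] := evaluation_solvable (is_policy_det f)
  (fun y => \sum_s' P y (f y) s' * rew s').
exists V => y yn; rewrite V_eval // qvalue_split; congr (_ + _).
by apply: eq_bigr => s _; rewrite chain_det.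
Qed.

(* values on terminal states are irrelevant and left unspecified *)
Definition det_value (f : {ffun S -> A}) : S -> R := projT1 (cid (exists_det_value f)).

Lemma det_valueE f y : y \notin term -> det_value f y = qvalue (det_value f) y (f y).
Proof. exact: (projT2 (cid (exists_det_value f))). Qed.

Lemma det_value_improvement (f f' : {ffun S -> A}) :
  solves_evaluation (det_policy f')
    (fun s => qvalue (det_value f) s (f' s) - det_value f s)
    (fun s => det_value f' s - det_value f s).
Proof.
move=> s sn; rewrite det_valueE // !qvalue_split.
under [X in _ = _ + X]eq_bigr do rewrite chain_det mulrBr.
by rewrite sumrB; ring.
Qed.

Section OptimalValue.
Variable a0 : A.

Definition total_value (f : {ffun S -> A}) := \sum_(y | y \notin term) det_value f y.

Definition opt_decision := [arg max_(f > [ffun=> a0]) total_value f]%O.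

Lemma total_value_max f : total_value f <= total_value opt_decision.
Proof. by rewrite /opt_decision; case: arg_maxP => // i _; exact. Qed.

Let Vopt := det_value opt_decision.

(* a strict one-step improvement at [y] would raise [total_value] *)
Lemma qvalue_opt_le y a : y \notin term -> qvalue Vopt y a <= Vopt y.
Proof.
move=> yn; rewrite leNgt; apply/negP => improves.
pose f := [ffun s => if s == y then a else opt_decision s].
pose D s := det_value f s - Vopt s.
have gain_ge0 s : s \notin term -> 0 <= qvalue Vopt s (f s) - Vopt s.
  move=> sn; rewrite /f ffunE; case: eqP => [->|_]; first by rewrite subr_ge0 ltW.
  by rewrite /Vopt -det_valueE // subrr.
have D_eval := det_value_improvement opt_decision f.
have D_ge0 := evaluation_ge0 (is_policy_det f) gain_ge0 D_eval.
have Dy : 0 < D y.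
  rewrite /D D_eval //; apply: ltr_pwDl; last first.
    apply: sumr_ge0 => x xn.
    by rewrite mulr_ge0 ?chain_ge0 ?D_ge0 //; exact: is_policy_det.
  by rewrite /f ffunE eqxx subr_gt0.
have : total_value opt_decision < total_value f.
  rewrite -subr_gt0 /total_value -sumrB; apply: lt_le_trans Dy _.
  by apply: ler_sum_term => // x xn; exact: D_ge0.
by rewrite ltNge total_value_max.
Qed.

End OptimalValue.

Definition policy_backup (pi Q : S -> A -> R) s a :=
  \sum_s' P s a s' * (rew s' + (if s' \in term then 0 else \sum_a' pi s' a' * Q s' a')).

Lemma le_policy_backup_bellman pi Q s a :
  is_policy pi -> policy_backup pi Q s a <= bellman P rew term Q s a.
Proof.
move=> [pi_ge0 pi_sum1]; apply: ler_sum => s' _; rewrite ler_wpM2l // lerD2l.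
case: ifP => // _; rewrite -[maxQ Q s']mul1r -(pi_sum1 s') mulr_suml.
by apply: ler_sum => a' _; rewrite ler_wpM2l ?le_maxQ.
Qed.

Definition occupancy_mult (pi : S -> A -> R) s a := pi s a * occupancy pi s.

Lemma occupancy_mult_ge0 pi : is_policy pi -> nonneg_mult (occupancy_mult pi).
Proof. by move=> pol s a; rewrite mulr_ge0 ?occupancy_ge0 //; case: pol. Qed.

Section Duality.
Context { pi : S -> A -> R } (pi_policy : is_policy pi).

Lemma policy_backup_lagrangian Q :
  Eterm pi Q + \sum_s \sum_a occupancy_mult pi s a * (policy_backup pi Q s a - Q s a)
  = J pi.
Proof.
pose q s := \sum_a pi s a * Q s a.
pose W s := rew s + (if s \in term then 0 else q s).
have backup_avg s :
    \sum_s' chain pi s s' * W s' = \sum_a pi s a * policy_backup pi Q s a.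
  rewrite /chain; under eq_bigr do rewrite mulr_suml.
  rewrite exchange_big /=; apply: eq_bigr => a _; rewrite mulr_sumr.
  by apply: eq_bigr => s' _; rewrite mulrA.
have row s : \sum_a occupancy_mult pi s a * (policy_backup pi Q s a - Q s a) =
    occupancy pi s * (\sum_s' chain pi s s' * W s') - occupancy pi s * q s.
  rewrite backup_avg -mulrBr /q -sumrB mulr_sumr; apply: eq_bigr => a _.
  by rewrite /occupancy_mult; ring.
under eq_bigr do rewrite row.
rewrite sumrB occupancy_stationary // (J_occupancy pi_policy) Eterm_occupancy //.
have dW : \sum_s occupancy pi s * W s =
    \sum_s occupancy pi s * rew s + \sum_(s | s \notin term) occupancy pi s * q s.
  rewrite [X in _ = _ + X]big_mkcond -big_split /=; apply: eq_bigr => s _.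
  by rewrite /W mulrDr; case: ifP; rewrite ?mulr0.
by rewrite dW [X in _ - X](bigID (mem term)) /=; lra.
Qed.

Lemma J_le_lagrangian Q : J pi <= lagrangian P rew term s0 pi Q (occupancy_mult pi).
Proof.
rewrite -(policy_backup_lagrangian Q) lerD2l; apply: ler_sum => s _.
apply: ler_sum => a _; rewrite ler_wpM2l ?occupancy_mult_ge0 // lerD2r.
exact: le_policy_backup_bellman.
Qed.

End Duality.

Lemma lagrangian_bellman_fixpoint pi Q lam :
  (forall s a, bellman P rew term Q s a = Q s a) ->
  lagrangian P rew term s0 pi Q lam = Eterm pi Q.
Proof.
move=> Q_fix; rewrite /lagrangian big1 ?addr0 // => s _.
by rewrite big1 // => a _; rewrite Q_fix subrr mulr0.
Qed.

Lemma Eterm_const_term pi Q c :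
  is_policy pi -> (forall s a, s \in term -> Q s a = c) -> Eterm pi Q = c.
Proof.
move=> pol Q_term; rewrite Eterm_occupancy //.
transitivity (\sum_(s in term) occupancy pi s * c).
  apply: eq_bigr => s s_term; under eq_bigr do rewrite Q_term //.
  by rewrite -mulr_suml (proj2 pol s) mul1r.
by rewrite -mulr_suml occupancy_term_sum1 // mul1r.
Qed.

Section Saddle.
Variables (a0 : A) (mu : S -> A -> R) (mu_policy : is_policy mu).
Hypothesis mu_opt : forall pi, is_policy pi -> J pi <= J mu.

Let Vopt := det_value (opt_decision a0).
Let Qopt := qvalue Vopt.

Lemma maxQ_Qopt s : s \notin term -> maxQ Qopt s = Vopt s.
Proof.
move=> sn; have [a [-> Qa]] := maxQ_attained a0 Qopt s.
apply/eqP; rewrite eq_le qvalue_opt_le //=.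
by rewrite /Vopt det_valueE //; exact: Qa.
Qed.

Lemma bellman_Qopt s a : bellman P rew term Qopt s a = Qopt s a.
Proof.
apply: eq_bigr => s' _; congr (_ * (_ + _)).
by case: ifP => // /negbT sn; rewrite maxQ_Qopt.
Qed.

Lemma policy_backup_opt_Qopt s a :
  policy_backup (det_policy (opt_decision a0)) Qopt s a = Qopt s a.
Proof.
apply: eq_bigr => s' _; congr (_ * (_ + _)); case: ifP => // /negbT sn.
rewrite (bigD1 (opt_decision a0 s')) //= big1 => [|a' /negbTE ne]; last first.
  by rewrite /det_policy ne mul0r.
by rewrite addr0 /det_policy eqxx mul1r /Qopt /Vopt -det_valueE.
Qed.

Let c := \sum_s' rho s' * (rew s' + (if s' \in term then 0 else Vopt s')).

Lemma Eterm_Qopt pi : is_policy pi -> Eterm pi Qopt = c.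
Proof.
move=> pol; apply: Eterm_const_term => // s a s_term.
by apply: eq_bigr => s' _; rewrite P_restart.
Qed.

Lemma lagrangian_Qopt lam : lagrangian P rew term s0 mu Qopt lam = J mu.
Proof.
have opt_policy := is_policy_det (opt_decision a0).
have J_opt : J (det_policy (opt_decision a0)) = c.
  rewrite -(policy_backup_lagrangian opt_policy Qopt) (Eterm_Qopt _ opt_policy).
  rewrite big1 ?addr0 // => s _; rewrite big1 // => a _.
  by rewrite policy_backup_opt_Qopt subrr mulr0.
rewrite lagrangian_bellman_fixpoint; last exact: bellman_Qopt.
apply/eqP; rewrite eq_le (Eterm_Qopt _ mu_policy) -{1}J_opt mu_opt //=.
rewrite -(Eterm_Qopt _ mu_policy).
rewrite -(@lagrangian_bellman_fixpoint _ _ (occupancy_mult mu)).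
  exact: J_le_lagrangian.
exact: bellman_Qopt.
Qed.

Lemma lagrangian_saddle_point : exists Q0 lam0, [/\ nonneg_mult lam0,
  forall lam, lagrangian P rew term s0 mu Q0 lam = J mu &
  forall Q, J mu <= lagrangian P rew term s0 mu Q lam0].
Proof.
exists Qopt, (occupancy_mult mu); split; first exact: occupancy_mult_ge0.
  exact: lagrangian_Qopt.
exact: J_le_lagrangian.
Qed.

End Saddle.

End FiniteELP.

Theorem mainTheorem6 (R : realType) (S A : finType)
  (P : S -> A -> S -> R) (rew : S -> R) (rho : S -> R)
  (term : {set S}) (s0 : S) (mu : S -> A -> R) :
  is_finite_ELP P rho term s0 ->
  is_optimal P rew term s0 mu ->
  [/\ ereal_inf (range (sup_lam P rew term s0 mu)) = (J P rew term s0 mu)%:E,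
      (exists Q : S -> A -> R,
         sup_lam P rew term s0 mu Q = (J P rew term s0 mu)%:E /\
         exists lam, nonneg_mult lam /\
           lagrangian P rew term s0 mu Q lam = J P rew term s0 mu),
      ereal_sup [set inf_Q P rew term s0 mu lam | lam in @nonneg_mult R S A]
        = (J P rew term s0 mu)%:E &
      (exists lam, nonneg_mult lam /\
         inf_Q P rew term s0 mu lam = (J P rew term s0 mu)%:E /\
         exists Q, lagrangian P rew term s0 mu Q lam = J P rew term s0 mu)].
Proof.
move=> [[P_ge0 P_sum1] _ [_ s0_term] finite_T [P_restart reachable]] [mu_policy mu_opt].
have [a0 _] : exists a0 : A, true.
  have /psumr_neq0P[a0 _|a0 _] : \sum_a mu s0 a <> 0.
  - by rewrite (proj2 mu_policy s0) => /eqP; rewrite oner_eq0.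
  - by case: mu_policy.
  - by exists a0.
have [Q0 [lam0 [lam0_ge0 Q0_saddle lam0_saddle]]] :=
  @lagrangian_saddle_point _ _ _ P rew rho term s0
    P_ge0 P_sum1 s0_term finite_T P_restart reachable a0 mu
    mu_policy mu_opt.
have [inf_sup sup_Q0 sup_inf inf_lam0] :=
  saddle_point_value lam0_ge0 (fun lam _ => Q0_saddle lam) lam0_saddle.
split=> //.
- by exists Q0; split=> //; exists lam0.
- by exists lam0; split=> //; split=> //; exists Q0.
Qed.
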